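(* Let $\pi \in S_{n+1}$ have no fixed points. Then $\pi$ has no stretching pairs if and only if there exists $\ell \in [n]$ such that $\mathrm{Exc}(\pi) = \{1,\dots,\ell\}$.
   Context: For $\pi \in S_{n+1}$, $\mathrm{Exc}(\pi) = \{i \in [n] : \pi(i) > i\}$ is the excedance set. A pair $1\le i<j\le n+1$ is a stretching pair of $\pi$ if $\pi(i) < i < j < \pi(j)$. *)

From mathcomp Require Import all_boot all_fingroup.
Set Implicit Arguments. Unset Strict Implicit. Unset Printing Implicit Defensive.

(* Permutations of [n+1] = {1,...,n+1} are modelled as 'S_(n.+1), acting on
   'I_(n.+1) = {0,...,n}; the element i : 'I_(n.+1) stands for i+1.
   Comparisons are invariant under this shift. *)

Definition Exc n (pi : 'S_(n.+1)) : {set 'I_(n.+1)} := [set i : 'I_(n.+1) | i < pi i].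

Definition stretching_pair n (pi : 'S_(n.+1)) (i j : 'I_(n.+1)) : bool :=
  [&& pi i < i, i < j & j < pi j].

Definition fixed_point_free n (pi : 'S_(n.+1)) : bool :=
  [forall i : 'I_(n.+1), pi i != i].

From mathcomp Require Import all_boot all_fingroup.
Set Implicit Arguments. Unset Strict Implicit. Unset Printing Implicit Defensive.

(* Without fixed points every index is either an excedance or a deficiency
   (pi i < i).  A stretching pair is a deficiency followed by a later
   excedance, so there is none exactly when the excedances form an initial
   segment {0, ..., l-1}; since pi 0 > 0 and pi n < n + 1, such an l lies in
   [1, n]. *)

Lemma downward_closed_ord_setE m (A : {set 'I_m}) :
    (forall i j : 'I_m, i <= j -> j \in A -> i \in A) ->
  A = [set i : 'I_m | i < \max_(j in A) j.+1].
Proof.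
move=> downA; apply/setP => i; rewrite inE.
apply/idP/idP => [iA | lt_i_max].
  exact: (@leq_bigmax_cond _ (mem A) (fun j : 'I_m => j.+1)).
apply/negPn/negP => iNA; move: lt_i_max; rewrite ltnNge => /negP; apply.
apply/bigmax_leqP => j jA; rewrite ltnNge; apply/negP => le_i_j.
by move: iNA; rewrite (downA i j).
Qed.

Section Excedances.

Variables (n : nat) (pi : 'S_(n.+1)).

Lemma ord_max_notin_Exc : ord_max \notin Exc pi.
Proof. by rewrite inE -leqNgt -ltnS. Qed.

Lemma no_stretching_pair_of_Exc_initial l :
  Exc pi = [set i : 'I_(n.+1) | i < l] -> forall i j, ~~ stretching_pair pi i j.
Proof.
move=> ExcE i j; apply/and3P => -[pi_i_lt lt_ij lt_j_pi].
have : j \in Exc pi by rewrite inE.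
rewrite ExcE inE => lt_j_l.
have : i \in Exc pi by rewrite ExcE inE (ltn_trans lt_ij lt_j_l).
by rewrite inE ltnNge ltnW.
Qed.

Hypothesis pi_ffp : fixed_point_free pi.

Lemma ltn_perm_notin_Exc i : i \notin Exc pi -> pi i < i.
Proof.
rewrite inE -leqNgt ltn_neqAle => ->; rewrite andbT.
by have := forallP pi_ffp i; apply: contra => /eqP/val_inj ->.
Qed.

Lemma ord0_in_Exc : ord0 \in Exc pi.
Proof. by apply/negPn/negP => /ltn_perm_notin_Exc. Qed.

Lemma Exc_downward_closed :
    (forall i j, ~~ stretching_pair pi i j) ->
  forall i j : 'I_(n.+1), i <= j -> j \in Exc pi -> i \in Exc pi.
Proof.
move=> noSP i j; rewrite leq_eqVlt => /orP[/eqP/val_inj -> // | lt_ij].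
rewrite inE => lt_j_pi; apply/negPn/negP => /ltn_perm_notin_Exc pi_i_lt.
by have := noSP i j; rewrite /stretching_pair pi_i_lt lt_ij lt_j_pi.
Qed.

End Excedances.

Theorem mainTheorem7 (n : nat) (pi : 'S_(n.+1)) :
  fixed_point_free pi ->
  ((forall i j : 'I_(n.+1), ~~ stretching_pair pi i j) <->
   (exists l : nat, [/\ 1 <= l, l <= n & Exc pi = [set i : 'I_(n.+1) | i < l]])).
Proof.
move=> pi_ffp; split=> [noSP | [l [_ _ ExcE]]]; last first.
  exact: no_stretching_pair_of_Exc_initial ExcE.
have ExcE := downward_closed_ord_setE (Exc_downward_closed pi_ffp noSP).
exists (\max_(j in Exc pi) j.+1); split; last exact: ExcE.
- by have := ord0_in_Exc pi_ffp; rewrite [in X in X -> _]ExcE inE.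
- by have := ord_max_notin_Exc pi; rewrite [in X in X -> _]ExcE inE /= -leqNgt.
Qed.
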